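(* Let $G$ be a word hyperbolic group and $0\to\mathbb Z\xrightarrow{\iota}E\xrightarrow{\pi}G\to1$ a central extension, $X$ a finite set mapping onto a symmetric generating set of $E$ (evaluation $w\mapsto\overline w\in E$). Let $C>0$ be an integer such that for every $g\in G$ the maximum $\max\{\overline w\,\iota(-C\,\mathrm{len}(w)): w\in X^*,\ \pi(\overline w)=g\}$ exists in the ordered fibre $\pi^{-1}(g)$, and such that for some $\lambda>0$ every word achieving this maximum is a $(\lambda,0)$-quasigeodesic in the Cayley graph of $G$ with respect to $\pi(\overline X)$; let $\rho(g)$ denote this maximum. Then for every constant $k$ there is a constant $K(k)$ such that whenever $g,h\in G$ and $g$ lies within distance $k$ of a geodesic path in the Cayley graph of $G$ from $1$ to $gh$, we have $d_E(\rho(gh),\rho(g)\rho(h))\le K(k)$.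
   Context: Order on a fibre: $h_1\le h_2$ iff $h_2h_1^{-1}=\iota(n)$ with $n\ge0$. $d_E$ is the word metric on $E$ with respect to the generating set $\overline X$. *)

From Stdlib Require Import ZArith Reals List Lia Lra FinFun.
Import ListNotations.

Record Group := {
  gcar :> Type;
  gmul : gcar -> gcar -> gcar;
  ginv : gcar -> gcar;
  gone : gcar;
  gassoc : forall a b c, gmul a (gmul b c) = gmul (gmul a b) c;
  gone_l : forall a, gmul gone a = a;
  ginv_l : forall a, gmul (ginv a) a = gone
}.

Arguments gmul {g}.
Arguments ginv {g}.
Arguments gone {g}.

Definition word_eval {H : Group} {Y : Type} (s : Y -> H) (w : list Y) : H :=
  fold_right (fun y acc => gmul (s y) acc) gone w.

Definition fin_sym_gen {H : Group} {Y : Type} (s : Y -> H) : Prop :=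
  Finite Y /\
  (forall y, exists y', s y' = ginv (s y)) /\
  (forall a : H, exists w : list Y, word_eval s w = a).

Definition dist_le {H : Group} {Y : Type} (s : Y -> H) (a b : H) (n : nat) : Prop :=
  exists w : list Y, length w <= n /\ gmul a (word_eval s w) = b.

Definition is_dist {H : Group} {Y : Type} (s : Y -> H) (a b : H) (n : nat) : Prop :=
  dist_le s a b n /\ forall m, dist_le s a b m -> n <= m.

Definition vertex {H : Group} {Y : Type} (s : Y -> H) (a : H) (w : list Y) (i : nat) : H :=
  gmul a (word_eval s (firstn i w)).

Definition geodesic_word {H : Group} {Y : Type} (s : Y -> H) (a b : H) (w : list Y) : Prop :=
  gmul a (word_eval s w) = b /\ is_dist s a b (length w).

Definition near_path {H : Group} {Y : Type} (s : Y -> H) (k : nat) (x a : H) (w : list Y) : Prop :=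
  exists i, i <= length w /\ dist_le s x (vertex s a w i) k.

Definition delta_hyperbolic {H : Group} {Y : Type} (s : Y -> H) (delta : nat) : Prop :=
  forall (a b c : H) (p q r : list Y),
    geodesic_word s a b p -> geodesic_word s b c q -> geodesic_word s c a r ->
    forall i, i <= length p ->
      near_path s delta (vertex s a p i) b q \/ near_path s delta (vertex s a p i) c r.

Definition word_hyperbolic (H : Group) : Prop :=
  exists (Y : Type) (s : Y -> H) (delta : nat), fin_sym_gen s /\ delta_hyperbolic s delta.

Definition is_group_hom {A B : Group} (f : A -> B) : Prop :=
  forall a b, f (gmul a b) = gmul (f a) (f b).

Definition central_extension (E G : Group) (iota : Z -> E) (pi : E -> G) : Prop :=
  (forall m n : Z, iota (m + n)%Z = gmul (iota m) (iota n)) /\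
  (forall m n : Z, iota m = iota n -> m = n) /\
  is_group_hom pi /\
  (forall g : G, exists e, pi e = g) /\
  (forall e : E, pi e = gone <-> exists n, e = iota n) /\
  (forall (n : Z) (e : E), gmul (iota n) e = gmul e (iota n)).

Definition fib_le {E : Group} (iota : Z -> E) (h1 h2 : E) : Prop :=
  exists n : Z, (0 <= n)%Z /\ gmul h2 (ginv h1) = iota n.

Definition wval {E : Group} {X : Type} (ev : X -> E) (iota : Z -> E) (C : Z) (w : list X) : E :=
  gmul (word_eval ev w) (iota (- C * Z.of_nat (length w))%Z).

Definition is_fib_max {E G : Group} {X : Type} (ev : X -> E) (iota : Z -> E) (pi : E -> G)
    (C : Z) (g : G) (m : E) : Prop :=
  (exists w, pi (word_eval ev w) = g /\ wval ev iota C w = m) /\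
  (forall w, pi (word_eval ev w) = g -> fib_le iota (wval ev iota C w) m).

Definition quasigeodesic {H : Group} {Y : Type} (s : Y -> H) (lam : R) (w : list Y) : Prop :=
  forall i j d, i <= length w -> j <= length w ->
    is_dist s (vertex s gone w i) (vertex s gone w j) d ->
    (INR (Nat.max i j - Nat.min i j) <= lam * INR d)%R /\
    (INR d <= lam * INR (Nat.max i j - Nat.min i j))%R.

From Stdlib Require Import ZArith Reals List Lia Lra.
From Stdlib Require Import Wf_nat Classical ClassicalEpsilon FinFun.
Import ListNotations.

(* Let u be a word realising rho (g h).  It is a quasigeodesic in the hyperbolic
   group G, so by the Morse lemma the point g, which lies near a geodesic from 1 to
   g h, is within a uniform distance D of a vertex u_m of u.  Cut u at u_m and splice
   in a path w from g to u_m preceded by its inverse v: the words (u_<m v) and (w u_>=m)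
   represent g and h, and the product of their values is rho (g h) iota (-2 C |w|).
   Maximality bounds these values by rho g and rho h in the fibre order, and also gives
   rho g rho h <= rho (g h); hence rho (g h) = iota n (rho g rho h) with
   0 <= n <= 2 C D, a central element of word length at most n times that of iota (-1).

   The Morse lemma is proved for discrete paths in the Cayley graph of a generating set
   with delta-thin triangles: by bisection a geodesic stays within delta log n + L of
   any L-coarse path of length n, and a geodesic point far from a quasigeodesic would
   admit a detour around it that is too short for that bound. *)

Lemma pow2_ge_succ t : t + 1 <= 2 ^ t.
Proof. induction t; simpl; lia. Qed.

Lemma pow2_ge_linear a b : exists T, forall t, T <= t -> a * t + b <= 2 ^ t.
Proof.
  set (m := 2 * a + b + 1). exists (2 * m). intros t le. induction le as [|t le IH].
  - replace (2 ^ (2 * m)) with (2 ^ m * 2 ^ m) by (rewrite <- Nat.pow_add_r; f_equal; lia).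
    pose proof (pow2_ge_succ m). unfold m in *. nia.
  - pose proof (pow2_ge_succ t). simpl. unfold m in *. lia.
Qed.

Lemma exists_log_scale a b L :
  exists D0, forall D, D0 < D -> exists k, a * D <= 2 ^ k /\ b * k + L < D.
Proof.
  destruct (pow2_ge_linear (a * b) (a * b + a * L)) as [T HT].
  exists (b * T + L). intros D HD.
  destruct (Nat.le_gt_cases (a * D) 1) as [le1|gt1]; [exists 0; simpl; lia|].
  exists (Nat.log2_up (a * D)). destruct (Nat.log2_up_spec (a * D) gt1) as [S1 S2].
  split; [exact S2|]. set (k := Nat.log2_up (a * D)) in *.
  destruct (Nat.le_gt_cases k T); [nia|].
  specialize (HT (Nat.pred k) ltac:(lia)).
  assert (a * (b * k + L) < a * D) by (replace k with (S (Nat.pred k)) at 1 by lia; nia).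
  nia.
Qed.

Lemma nat_crossing (P Q : nat -> Prop) n :
  P 0 -> Q n -> (forall i, i <= n -> P i \/ Q i) ->
  exists i, i <= n /\ P i /\ (Q i \/ (i < n /\ Q (S i))).
Proof.
  intros P0 Qn PQ.
  assert (Hcross : forall t, t <= n ->
    (exists i, i <= n /\ P i /\ (Q i \/ (i < n /\ Q (S i)))) \/ P t).
  { induction t as [|t IH]; intro le; [now right|].
    destruct (IH ltac:(lia)) as [|Pt]; [now left|].
    destruct (PQ (S t) le) as [|Qt]; [now right|].
    left. exists t. split; [lia|split; [exact Pt|right; split; [lia|exact Qt]]]. }
  destruct (Hcross n (le_n n)) as [|Pn]; [assumption|].
  exists n. split; [lia|split; [exact Pn|left; exact Qn]].
Qed.

Section GroupFacts.
Variable H : Group.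
Implicit Types a b c : H.

Lemma gmul_inv_r a : gmul a (ginv a) = gone.
Proof.
  transitivity (gmul (ginv (ginv a)) (gmul (ginv a) (gmul a (ginv a)))).
  - now rewrite gassoc, ginv_l, gone_l.
  - now rewrite (gassoc H (ginv a) a), ginv_l, gone_l, ginv_l.
Qed.

Lemma gmul_one_r a : gmul a gone = a.
Proof. now rewrite <- (ginv_l H a), gassoc, gmul_inv_r, gone_l. Qed.

Lemma gmul_cancel_l a b c : gmul a b = gmul a c -> b = c.
Proof.
  intro E. now rewrite <- (gone_l H b), <- (gone_l H c), <- (ginv_l H a), <- !gassoc, E.
Qed.

Lemma gmul_cancel_r a b c : gmul b a = gmul c a -> b = c.
Proof.
  intro E. now rewrite <- (gmul_one_r b), <- (gmul_one_r c), <- (gmul_inv_r a), !gassoc, E.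
Qed.

Lemma ginv_unique a b : gmul a b = gone -> b = ginv a.
Proof. intro E. apply (gmul_cancel_l a). now rewrite E, gmul_inv_r. Qed.

Lemma ginv_mul a b : ginv (gmul a b) = gmul (ginv b) (ginv a).
Proof.
  symmetry. apply ginv_unique.
  now rewrite <- gassoc, (gassoc H b), gmul_inv_r, gone_l, gmul_inv_r.
Qed.

Lemma ginv_one : ginv (gone : H) = gone.
Proof. symmetry. apply ginv_unique, gone_l. Qed.

End GroupFacts.

Section Homomorphisms.
Context {A B : Group} (f : A -> B).
Hypothesis f_hom : is_group_hom f.

Lemma hom_one : f gone = gone.
Proof. apply (gmul_cancel_l _ (f gone)). now rewrite <- f_hom, gone_l, gmul_one_r. Qed.

Lemma hom_inv a : f (ginv a) = ginv (f a).
Proof. apply ginv_unique. now rewrite <- f_hom, gmul_inv_r, hom_one. Qed.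

Lemma hom_word_eval {Y : Type} (s : Y -> A) w :
  f (word_eval s w) = word_eval (fun y => f (s y)) w.
Proof.
  induction w as [|y w IH]; simpl; [apply hom_one|]. now rewrite f_hom, IH.
Qed.

Lemma fin_sym_gen_hom_image {Y : Type} (s : Y -> A) :
  (forall b, exists a, f a = b) -> fin_sym_gen s -> fin_sym_gen (fun y => f (s y)).
Proof.
  intros f_surj [fin [sym gen]]. split; [exact fin|split].
  - intro y. destruct (sym y) as [y' Ey]. exists y'. now rewrite Ey, hom_inv.
  - intro b. destruct (f_surj b) as [a <-]. destruct (gen a) as [w <-]. exists w.
    now rewrite hom_word_eval.
Qed.

End Homomorphisms.

Lemma word_eval_app {H : Group} {Y : Type} (s : Y -> H) (u v : list Y) :
  word_eval s (u ++ v) = gmul (word_eval s u) (word_eval s v).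
Proof.
  induction u as [|y u IH]; simpl; [now rewrite gone_l|]. now rewrite IH, gassoc.
Qed.

Lemma word_eval_split_at {H : Group} {Y : Type} (s : Y -> H) (g h : H) (u w v : list Y) m :
  word_eval s u = gmul g h ->
  gmul g (word_eval s w) = word_eval s (firstn m u) ->
  word_eval s v = ginv (word_eval s w) ->
  word_eval s (firstn m u ++ v) = g /\ word_eval s (w ++ skipn m u) = h.
Proof.
  intros Eu Ew Ev. rewrite !word_eval_app, Ev, <- Ew. split.
  - now rewrite <- gassoc, gmul_inv_r, gmul_one_r.
  - apply (gmul_cancel_l _ g). rewrite <- Eu, gassoc, Ew, <- word_eval_app.
    now rewrite firstn_skipn.
Qed.

(** * Word metrics and discrete paths *)

Section WordMetric.
Context {H : Group} {Y : Type} (s : Y -> H).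
Hypothesis s_sym : forall y, exists y', s y' = ginv (s y).
Hypothesis s_gen : forall a : H, exists w, word_eval s w = a.

Lemma word_inv_exists w :
  exists w', length w' = length w /\ word_eval s w' = ginv (word_eval s w).
Proof.
  induction w as [|y w [w' [L E]]]; simpl.
  - exists []. split; [reflexivity|]. now rewrite ginv_one.
  - destruct (s_sym y) as [y' Ey]. exists (w' ++ [y']).
    rewrite length_app, word_eval_app, ginv_mul, <- E, <- Ey. simpl.
    rewrite gmul_one_r. split; [lia|reflexivity].
Qed.

Lemma is_dist_exists a b : exists n, is_dist s a b n.
Proof.
  destruct (dec_inh_nat_subset_has_unique_least_element (dist_le s a b))
    as [n [[Hn Hmin] _]].
  - intro n. apply classic.
  - destruct (s_gen (gmul (ginv a) b)) as [w Ew]. exists (length w), w.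
    split; [lia|]. now rewrite Ew, gassoc, gmul_inv_r, gone_l.
  - now exists n.
Qed.

Definition word_dist (a b : H) : nat := epsilon (inhabits 0) (is_dist s a b).

Lemma word_dist_spec a b : is_dist s a b (word_dist a b).
Proof. unfold word_dist. apply epsilon_spec, is_dist_exists. Qed.

Lemma dist_le_iff a b n : dist_le s a b n <-> word_dist a b <= n.
Proof.
  destruct (word_dist_spec a b) as [[w [Lw Ew]] Hmin]. split; [apply Hmin|].
  intro le. exists w. split; [lia|exact Ew].
Qed.

Lemma is_dist_word_dist a b n : is_dist s a b n -> n = word_dist a b.
Proof.
  intros [Hn Hmin]. destruct (word_dist_spec a b) as [Hd Hdmin].
  specialize (Hmin _ Hd). specialize (Hdmin _ Hn). lia.
Qed.

Lemma word_dist_word a w : word_dist a (gmul a (word_eval s w)) <= length w.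
Proof. apply dist_le_iff. now exists w. Qed.

Lemma geodesic_word_exists a b :
  exists w, length w = word_dist a b /\ gmul a (word_eval s w) = b.
Proof.
  destruct (word_dist_spec a b) as [[w [Lw Ew]] Hmin]. exists w. split; [|exact Ew].
  apply Nat.le_antisymm; [exact Lw|apply Hmin; now exists w].
Qed.

Lemma word_dist_refl a : word_dist a a = 0.
Proof.
  enough (word_dist a a <= 0) by lia. apply dist_le_iff. exists []. simpl.
  split; [lia|apply gmul_one_r].
Qed.

Lemma word_dist_sym a b : word_dist a b = word_dist b a.
Proof.
  enough (forall a b, word_dist b a <= word_dist a b) by (apply Nat.le_antisymm; auto).
  clear a b. intros a b. destruct (geodesic_word_exists a b) as [w [Lw Ew]].
  destruct (word_inv_exists w) as [w' [Lw' Ew']].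
  rewrite <- Lw, <- Lw'. replace a with (gmul b (word_eval s w')); [apply word_dist_word|].
  now rewrite Ew', <- Ew, <- gassoc, gmul_inv_r, gmul_one_r.
Qed.

Lemma word_dist_triangle a b c : word_dist a c <= word_dist a b + word_dist b c.
Proof.
  destruct (geodesic_word_exists a b) as [u [Lu Eu]].
  destruct (geodesic_word_exists b c) as [v [Lv Ev]].
  rewrite <- Lu, <- Lv, <- length_app, <- Ev, <- Eu, <- gassoc, <- word_eval_app.
  apply word_dist_word.
Qed.

Lemma word_dist_mul_l x a b : word_dist (gmul x a) (gmul x b) = word_dist a b.
Proof.
  enough (forall x a b, word_dist a b <= word_dist (gmul x a) (gmul x b)).
  { apply Nat.le_antisymm; auto. rewrite <- (gone_l H a) at 2. rewrite <- (gone_l H b) at 2.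
    rewrite <- (ginv_l H x), <- !gassoc. auto. }
  clear x a b. intros x a b. destruct (geodesic_word_exists (gmul x a) (gmul x b)) as [w [Lw Ew]].
  rewrite <- Lw. rewrite <- gassoc in Ew. apply gmul_cancel_l in Ew. rewrite <- Ew.
  apply word_dist_word.
Qed.

Lemma vertex_0 a w : vertex s a w 0 = a.
Proof. apply gmul_one_r. Qed.

Lemma vertex_length a w : vertex s a w (length w) = gmul a (word_eval s w).
Proof. unfold vertex. now rewrite firstn_all. Qed.

Lemma vertex_app a u v i : i <= length u -> vertex s a (u ++ v) i = vertex s a u i.
Proof.
  intro le. unfold vertex. rewrite firstn_app.
  replace (i - length u) with 0 by lia. now rewrite app_nil_r.
Qed.

Lemma word_dist_vertex a w i j : i <= j -> word_dist (vertex s a w i) (vertex s a w j) <= j - i.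
Proof.
  intro le. unfold vertex.
  rewrite <- (firstn_skipn i (firstn j w)), firstn_firstn, Nat.min_l by lia.
  rewrite word_eval_app, gassoc. eapply Nat.le_trans; [apply word_dist_word|].
  rewrite length_skipn, length_firstn. lia.
Qed.

(* A discrete path is given by a function [c : nat -> H] and a length [n]: it visits
   [c 0, ..., c n], and the values of [c] beyond [n] play no role. *)
Definition coarse_chain (L : nat) (c : nat -> H) (n : nat) : Prop :=
  forall i, i < n -> word_dist (c i) (c (S i)) <= L.

Definition geodesic_chain (c : nat -> H) (n : nat) : Prop :=
  forall i j, i <= j -> j <= n -> word_dist (c i) (c j) = j - i.

Definition near_chain (x : H) (c : nat -> H) (n R : nat) : Prop :=
  exists j, j <= n /\ word_dist x (c j) <= R.

Lemma coarse_chain_dist L c n i j :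
  coarse_chain L c n -> i <= j -> j <= n -> word_dist (c i) (c j) <= L * (j - i).
Proof.
  intros HL le1 le2. induction j as [|j IH].
  - replace i with 0 by lia. rewrite word_dist_refl. lia.
  - destruct (Nat.eq_dec i (S j)) as [->|ne]; [rewrite word_dist_refl; lia|].
    specialize (IH ltac:(lia) ltac:(lia)). specialize (HL j ltac:(lia)).
    pose proof (word_dist_triangle (c i) (c j) (c (S j))). nia.
Qed.

Lemma geodesic_chain_coarse L c n : 1 <= L -> geodesic_chain c n -> coarse_chain L c n.
Proof. intros HL Hc i lt. rewrite Hc by lia. lia. Qed.

Lemma geodesic_chain_shift c n u m :
  geodesic_chain c n -> u + m <= n -> geodesic_chain (fun i => c (u + i)) m.
Proof. intros Hc le i j lij lj. rewrite Hc by lia. lia. Qed.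

Lemma geodesic_chain_rev c n : geodesic_chain c n -> geodesic_chain (fun i => c (n - i)) n.
Proof. intros Hc i j lij lj. rewrite word_dist_sym, Hc by lia. lia. Qed.

Lemma geodesic_word_chain a b p :
  geodesic_word s a b p -> geodesic_chain (vertex s a p) (length p).
Proof.
  intros [Ep Dp]. apply is_dist_word_dist in Dp. intros i j lij lj.
  apply Nat.le_antisymm; [now apply word_dist_vertex|].
  pose proof (word_dist_triangle a (vertex s a p i) b).
  pose proof (word_dist_triangle (vertex s a p i) (vertex s a p j) b).
  pose proof (word_dist_vertex a p 0 i ltac:(lia)).
  pose proof (word_dist_vertex a p j (length p) lj).
  rewrite vertex_0 in *. rewrite vertex_length, Ep in *. lia.
Qed.

Lemma word_of_chain_steps c n :
  (forall i, i < n -> exists y, gmul (c i) (s y) = c (S i)) ->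
  exists p, length p = n /\ forall i, i <= n -> vertex s (c 0) p i = c i.
Proof.
  induction n as [|n IH]; intro Hstep.
  - exists []. split; [reflexivity|]. intros i le. replace i with 0 by lia. apply vertex_0.
  - destruct IH as [p [Lp Vp]]; [intros; apply Hstep; lia|].
    destruct (Hstep n ltac:(lia)) as [y Ey]. exists (p ++ [y]).
    rewrite length_app. split; [simpl; lia|]. intros i le.
    destruct (Nat.eq_dec i (S n)) as [->|ne]; [|rewrite vertex_app by lia; apply Vp; lia].
    rewrite <- Ey, <- (Vp n), <- Lp by lia.
    replace (S (length p)) with (length (p ++ [y])) by (rewrite length_app; simpl; lia).
    rewrite !vertex_length, word_eval_app, gassoc. simpl. now rewrite gmul_one_r.
Qed.

Lemma geodesic_chain_word c n : geodesic_chain c n ->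
  exists p, geodesic_word s (c 0) (c n) p /\ length p = n /\
    forall i, i <= n -> vertex s (c 0) p i = c i.
Proof.
  intro Hc. destruct (word_of_chain_steps c n) as [p [Lp Vp]].
  - intros i lt. assert (dist_le s (c i) (c (S i)) 1) as [[|y [|]] [Lw Ew]]
      by (apply dist_le_iff; rewrite Hc by lia; lia); simpl in *; try lia.
    + rewrite gmul_one_r in Ew. specialize (Hc i (S i) ltac:(lia) ltac:(lia)).
      rewrite Ew, word_dist_refl in Hc. lia.
    + exists y. now rewrite gmul_one_r in Ew.
  - assert (Ep : gmul (c 0) (word_eval s p) = c n)
      by (rewrite <- vertex_length, Lp; apply Vp; lia).
    exists p. repeat split; auto.
    + exists p. split; [lia|exact Ep].
    + intros m Hm. apply dist_le_iff in Hm. rewrite Hc in Hm by lia. lia.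
Qed.

Lemma geodesic_chain_exists a b :
  exists c, geodesic_chain c (word_dist a b) /\ c 0 = a /\ c (word_dist a b) = b.
Proof.
  destruct (geodesic_word_exists a b) as [w [Lw Ew]].
  exists (vertex s a w). rewrite <- Lw. split; [|split].
  - apply geodesic_word_chain with b. split; [exact Ew|].
    rewrite Lw. split; [now apply dist_le_iff|]. intros m Hm. now apply dist_le_iff.
  - apply vertex_0.
  - now rewrite vertex_length.
Qed.

Lemma near_chain_mono x c n R R' : R <= R' -> near_chain x c n R -> near_chain x c n R'.
Proof. intros le [j [lj Dj]]. exists j. split; [exact lj|lia]. Qed.

Lemma near_chain_trans x c n R c' n' R' :
  near_chain x c n R -> (forall j, j <= n -> near_chain (c j) c' n' R') ->
  near_chain x c' n' (R + R').
Proof.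
  intros [j [lj Dj]] Hc. destruct (Hc j lj) as [j' [lj' Dj']]. exists j'. split; [exact lj'|].
  pose proof (word_dist_triangle x (c j) (c' j')). lia.
Qed.

Lemma near_chain_shift x c n u m R :
  near_chain x (fun i => c (u + i)) m R -> u + m <= n -> near_chain x c n R.
Proof. intros [j [lj Dj]] le. exists (u + j). split; [lia|exact Dj]. Qed.

Lemma near_chain_rev x c n R : near_chain x (fun i => c (n - i)) n R -> near_chain x c n R.
Proof. intros [j [lj Dj]]. exists (n - j). split; [lia|exact Dj]. Qed.

Lemma near_path_chain k x a w c :
  (forall i, i <= length w -> vertex s a w i = c i) ->
  near_path s k x a w -> near_chain x c (length w) k.
Proof.
  intros Hc [i [li Di]]. exists i. split; [exact li|]. rewrite <- Hc by exact li.
  now apply dist_le_iff.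
Qed.

Lemma coarse_chain_shift L c n u m :
  coarse_chain L c n -> u + m <= n -> coarse_chain L (fun i => c (u + i)) m.
Proof. intros Hc le i lt. rewrite Nat.add_succ_r. apply Hc. lia. Qed.

Definition chain_cat (c1 : nat -> H) (n1 : nat) (c2 : nat -> H) : nat -> H :=
  fun i => if i <=? n1 then c1 i else c2 (i - n1).

Lemma chain_cat_0 c1 n1 c2 : chain_cat c1 n1 c2 0 = c1 0.
Proof. reflexivity. Qed.

Lemma chain_cat_end c1 n1 c2 n2 : c1 n1 = c2 0 -> chain_cat c1 n1 c2 (n1 + n2) = c2 n2.
Proof.
  intro E. unfold chain_cat. destruct (Nat.leb_spec (n1 + n2) n1).
  - replace n2 with 0 by lia. now rewrite Nat.add_0_r.
  - f_equal. lia.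
Qed.

Lemma coarse_chain_cat L c1 n1 c2 n2 :
  coarse_chain L c1 n1 -> coarse_chain L c2 n2 -> c1 n1 = c2 0 ->
  coarse_chain L (chain_cat c1 n1 c2) (n1 + n2).
Proof.
  intros H1 H2 E i lt. unfold chain_cat.
  destruct (Nat.leb_spec i n1), (Nat.leb_spec (S i) n1); try lia.
  - apply H1. lia.
  - replace i with n1 by lia. rewrite E, Nat.sub_succ_l, Nat.sub_diag by lia. apply H2. lia.
  - rewrite Nat.sub_succ_l by lia. apply H2. lia.
Qed.

Lemma near_chain_cat x c1 n1 c2 n2 R :
  near_chain x (chain_cat c1 n1 c2) (n1 + n2) R ->
  near_chain x c1 n1 R \/ near_chain x c2 n2 R.
Proof.
  intros [j [lj Dj]]. unfold chain_cat in Dj. destruct (Nat.leb_spec j n1).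
  - left. now exists j.
  - right. exists (j - n1). split; [lia|exact Dj].
Qed.

Definition chain_segment (c : nat -> H) (a b : nat) : nat -> H :=
  fun i => if a <=? b then c (a + i) else c (a - i).

Lemma chain_segment_0 c a b : chain_segment c a b 0 = c a.
Proof. unfold chain_segment. destruct (a <=? b); f_equal; lia. Qed.

Lemma chain_segment_end c a b : chain_segment c a b ((b - a) + (a - b)) = c b.
Proof. unfold chain_segment. destruct (Nat.leb_spec a b); f_equal; lia. Qed.

Lemma coarse_chain_segment L c n a b : coarse_chain L c n -> a <= n -> b <= n ->
  coarse_chain L (chain_segment c a b) ((b - a) + (a - b)).
Proof.
  intros Hc la lb i lt. unfold chain_segment. destruct (Nat.leb_spec a b).
  - rewrite Nat.add_succ_r. apply Hc. lia.
  - replace (a - i) with (S (a - S i)) by lia. rewrite word_dist_sym. apply Hc. lia.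
Qed.

Lemma chain_segment_point c a b j : j <= (b - a) + (a - b) ->
  exists j', j' <= Nat.max a b /\ chain_segment c a b j = c j'.
Proof.
  intro le. unfold chain_segment. destruct (Nat.leb_spec a b).
  - exists (a + j). split; [lia|reflexivity].
  - exists (a - j). split; [lia|reflexivity].
Qed.

Definition quasigeodesic_chain (L M : nat) (c : nat -> H) (n : nat) : Prop :=
  coarse_chain L c n /\
  forall i j, i <= j -> j <= n -> j - i <= M * word_dist (c i) (c j).

Lemma quasigeodesic_chain_index_gap L M c N i j :
  quasigeodesic_chain L M c N -> i <= N -> j <= N ->
  (j - i) + (i - j) <= M * word_dist (c i) (c j).
Proof.
  intros [_ Hq] li lj. destruct (Nat.le_ge_cases i j) as [le|le].
  - specialize (Hq _ _ le lj). lia.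
  - specialize (Hq _ _ le li). rewrite word_dist_sym. lia.
Qed.

Lemma far_point_anchor g n c N D i0 t :
  (forall i, i <= n -> near_chain (g i) c N D) ->
  (forall j, j <= N -> D <= word_dist (g i0) (c j)) -> t <= n ->
  word_dist (g i0) (g t) = 2 * D \/ (exists j, j <= N /\ g t = c j) ->
  exists j, j <= N /\ word_dist (g t) (c j) <= D /\
    D + word_dist (g t) (c j) <= word_dist (g i0) (g t).
Proof.
  intros Hnear Hfar lt [Et|[j [lj Et]]].
  - destruct (Hnear t lt) as [j [lj Dj]]. exists j. lia.
  - exists j. rewrite Et, word_dist_refl. specialize (Hfar j lj). repeat split; lia.
Qed.

(** * Thin triangles and the Morse lemma *)

Section Hyperbolic.
Variable delta : nat.
Hypothesis s_hyp : delta_hyperbolic s delta.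

Lemma thin_chain_triangle p n1 q n2 r n3 :
  geodesic_chain p n1 -> geodesic_chain q n2 -> geodesic_chain r n3 ->
  q 0 = p 0 -> r 0 = q n2 -> r n3 = p n1 ->
  forall i, i <= n1 -> near_chain (p i) q n2 delta \/ near_chain (p i) r n3 delta.
Proof.
  intros Hp Hq Hr Eq Er Ep i li.
  destruct (geodesic_chain_word p n1 Hp) as [wp [Gp [Lp Vp]]].
  destruct (geodesic_chain_word _ _ (geodesic_chain_rev r n3 Hr)) as [wr [Gr [Lr Vr]]].
  destruct (geodesic_chain_word _ _ (geodesic_chain_rev q n2 Hq)) as [wq [Gq [Lq Vq]]].
  rewrite Nat.sub_0_r in Gr, Vr, Gq, Vq. rewrite Nat.sub_diag in Gr, Gq.
  rewrite Ep, Er in Gr. rewrite Ep in Vr. rewrite Eq in Gq.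
  destruct (s_hyp _ _ _ wp wr wq Gp Gr Gq i ltac:(lia)) as [N|N];
    rewrite Vp in N by lia; [right|left]; apply near_chain_rev.
  - rewrite <- Lr. apply near_path_chain with (p n1); [|exact N].
    intros j lj. rewrite Lr in *. now apply Vr.
  - rewrite <- Lq. apply near_path_chain with (q n2); [|exact N].
    intros j lj. rewrite Lq in *. now apply Vq.
Qed.

Lemma geodesic_near_short_coarse_chain L c n g m :
  coarse_chain L c n -> n <= 1 -> geodesic_chain g m -> g 0 = c 0 -> g m = c n ->
  forall i, i <= m -> near_chain (g i) c n L.
Proof.
  intros Hc Hn Hg E0 Em i li. exists 0. split; [lia|].
  pose proof (Hg 0 m ltac:(lia) (le_n m)) as Dm. rewrite E0, Em in Dm.
  pose proof (coarse_chain_dist L c n 0 n Hc ltac:(lia) (le_n n)).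
  rewrite <- E0, word_dist_sym, Hg by lia. nia.
Qed.

(* Bisection: the triangle [c 0], [c (n / 2)], [c n] is [delta]-thin, and each half of
   the chain is handled by induction. *)
Lemma geodesic_near_coarse_chain L k : forall c n, coarse_chain L c n -> n <= 2 ^ k ->
  forall g m, geodesic_chain g m -> g 0 = c 0 -> g m = c n ->
  forall i, i <= m -> near_chain (g i) c n (delta * k + L).
Proof.
  induction k as [|k IH]; intros c n Hc Hn g m Hg E0 Em i li.
  all: destruct (Nat.le_gt_cases n 1) as [n1|n2];
    [apply near_chain_mono with L; [lia|];
     now apply geodesic_near_short_coarse_chain with (m := m)|].
  { simpl in Hn. lia. }
  assert (near_sub : forall u v a na, u <= v <= n -> v - u <= 2 ^ k ->
    geodesic_chain a na -> a 0 = c u -> a na = c v ->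
    forall j, j <= na -> near_chain (a j) c n (delta * k + L)).
  { intros u v a na luv lvu Ha Ea0 Ean j lj. apply near_chain_shift with u (v - u); [|lia].
    apply IH with (m := na); auto.
    - apply coarse_chain_shift with n; [exact Hc|lia].
    - now rewrite Nat.add_0_r.
    - now replace (u + (v - u)) with v by lia. }
  set (h := n / 2).
  assert (Hh : h <= 2 ^ k /\ n - h <= 2 ^ k /\ h <= n).
  { pose proof (Nat.div_mod n 2 ltac:(lia)). pose proof (Nat.mod_upper_bound n 2 ltac:(lia)).
    simpl in Hn. unfold h. lia. }
  destruct (geodesic_chain_exists (c 0) (c h)) as [a [Ha [Ea0 Eah]]].
  destruct (geodesic_chain_exists (c h) (c n)) as [b [Hb [Eb0 Ebn]]].
  replace (delta * S k + L) with (delta + (delta * k + L)) by lia.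
  destruct (thin_chain_triangle g m a _ b _ Hg Ha Hb ltac:(congruence) ltac:(congruence)
              ltac:(congruence) i li) as [N|N];
    (eapply near_chain_trans; [exact N|]); intros j lj.
  - apply near_sub with 0 h (word_dist (c 0) (c h)); auto; lia.
  - apply near_sub with h n (word_dist (c h) (c n)); auto; lia.
Qed.

Lemma far_from_detour_le L p1 l1 q l2 p3 l3 g n iy i0 iz D k :
  1 <= L -> geodesic_chain p1 l1 -> coarse_chain L q l2 -> geodesic_chain p3 l3 ->
  geodesic_chain g n -> p1 0 = g iy -> p1 l1 = q 0 -> q l2 = p3 0 -> p3 l3 = g iz ->
  l1 + (l2 + l3) <= 2 ^ k -> iy <= i0 <= iz -> iz <= n ->
  D + l1 <= word_dist (g i0) (g iy) -> D + l3 <= word_dist (g i0) (g iz) ->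
  (forall j, j <= l2 -> D <= word_dist (g i0) (q j)) ->
  D <= delta * k + L.
Proof.
  intros HL H1 Hq H3 Hg E0 E1 E2 E3 Hk li0 liz F1 F3 Fq.
  set (P := chain_cat p1 l1 (chain_cat q l2 p3)).
  assert (HP : coarse_chain L P (l1 + (l2 + l3))).
  { apply coarse_chain_cat; [now apply geodesic_chain_coarse| |now rewrite chain_cat_0].
    now apply coarse_chain_cat; [|apply geodesic_chain_coarse|]. }
  assert (EP : P (l1 + (l2 + l3)) = g (iy + (iz - iy))).
  { replace (iy + (iz - iy)) with iz by lia. unfold P. now rewrite !chain_cat_end. }
  assert (E0' : g (iy + 0) = P 0) by (rewrite Nat.add_0_r; exact (eq_sym E0)).
  pose proof (geodesic_near_coarse_chain L k P _ HP Hk (fun t => g (iy + t)) (iz - iy)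
    (geodesic_chain_shift g n iy (iz - iy) Hg ltac:(lia)) E0' (eq_sym EP) (i0 - iy) ltac:(lia))
    as Hnear.
  cbv beta in Hnear. replace (iy + (i0 - iy)) with i0 in Hnear by lia.
  destruct (near_chain_cat _ _ _ _ _ _ Hnear) as [[j [lj Dj]]|N];
    [|destruct (near_chain_cat _ _ _ _ _ _ N) as [[j [lj Dj]]|[j [lj Dj]]]].
  - pose proof (word_dist_triangle (g i0) (p1 j) (g iy)).
    assert (word_dist (p1 j) (g iy) = j) by (rewrite <- E0, word_dist_sym, H1; lia). lia.
  - specialize (Fq j lj). lia.
  - pose proof (word_dist_triangle (g i0) (p3 j) (g iz)).
    assert (word_dist (p3 j) (g iz) = l3 - j) by (rewrite <- E3, H3; lia). lia.
Qed.

(* If [g i0] is at distance more than [D] from [c], connect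
   [g] at the indices [i0 - 2(D+1)] and [i0 + 2(D+1)] to nearby points of [c] and follow
   [c] in between.  This detour has length O(D) but avoids the open (D+1)-ball around
   [g i0], which [far_from_detour_le] forbids for large [D]. *)
Lemma geodesic_near_quasigeodesic_chain_step L M c N g n D k :
  1 <= L -> quasigeodesic_chain L M c N -> geodesic_chain g n -> g 0 = c 0 -> g n = c N ->
  (6 * M + 2) * S D <= 2 ^ k -> delta * k + L < S D ->
  (forall i, i <= n -> near_chain (g i) c N (S D)) ->
  forall i, i <= n -> near_chain (g i) c N D.
Proof.
  intros HL Hcq Hg E0 En Hk HkD Hnear i0 li0.
  destruct (classic (near_chain (g i0) c N D)) as [|Hnot]; [assumption|exfalso].
  assert (Hfar : forall j, j <= N -> S D <= word_dist (g i0) (c j)).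
  { intros j lj. apply Nat.nlt_ge. intro lt. apply Hnot. exists j. split; [exact lj|lia]. }
  set (iy := i0 - 2 * S D). set (iz := Nat.min n (i0 + 2 * S D)).
  assert (Hiy : iy <= i0 /\ i0 - iy <= 2 * S D) by (unfold iy; lia).
  assert (Hiz : i0 <= iz <= n /\ iz - i0 <= 2 * S D) by (unfold iz; lia).
  destruct (far_point_anchor g n c N (S D) i0 iy Hnear Hfar ltac:(lia)) as [sy [lsy [Dy Fy]]].
  { destruct (Nat.le_gt_cases (2 * S D) i0); [left|right; exists 0; split; [lia|]].
    - rewrite word_dist_sym, Hg by lia. unfold iy. lia.
    - now replace iy with 0 by (unfold iy; lia). }
  destruct (far_point_anchor g n c N (S D) i0 iz Hnear Hfar ltac:(lia)) as [tz [ltz [Dz Fz]]].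
  { destruct (Nat.le_gt_cases (i0 + 2 * S D) n); [left|right; exists N; split; [lia|]].
    - rewrite Hg by lia. unfold iz. lia.
    - now replace iz with n by (unfold iz; lia). }
  rewrite (word_dist_sym (g iz)) in Dz, Fz.
  destruct (geodesic_chain_exists (g iy) (c sy)) as [p1 [H1 [E10 E11]]].
  destruct (geodesic_chain_exists (c tz) (g iz)) as [p3 [H3 [E30 E31]]].
  apply (proj1 (Nat.lt_nge _ _) HkD).
  apply (far_from_detour_le L p1 (word_dist (g iy) (c sy)) (chain_segment c sy tz)
           ((tz - sy) + (sy - tz)) p3 (word_dist (c tz) (g iz))
           g n iy i0 iz); auto.
  - apply coarse_chain_segment with N; [apply Hcq|exact lsy|exact ltz].
  - now rewrite chain_segment_0.
  - now rewrite chain_segment_end.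
  - (* the connecting geodesics have length at most D + 1, and the segment of [c]
       at most M times the distance 6(D + 1) between its endpoints *)
    pose proof (quasigeodesic_chain_index_gap L M c N sy tz Hcq lsy ltz).
    pose proof (word_dist_triangle (c sy) (g iy) (c tz)).
    pose proof (word_dist_triangle (g iy) (g iz) (c tz)).
    assert (word_dist (g iy) (g iz) = iz - iy) by (apply Hg; lia).
    rewrite (word_dist_sym (c sy) (g iy)), (word_dist_sym (g iz) (c tz)) in *.
    assert (word_dist (c sy) (c tz) <= 6 * S D) by lia. nia.
  - lia.
  - lia.
  - intros j lj. destruct (chain_segment_point c sy tz j lj) as [j' [lj' ->]]. apply Hfar. lia.
Qed.

Lemma geodesic_near_quasigeodesic_chain L M : 1 <= L -> exists D,
  forall c N g n, quasigeodesic_chain L M c N -> geodesic_chain g n -> g 0 = c 0 -> g n = c N ->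
  forall i, i <= n -> near_chain (g i) c N D.
Proof.
  intro HL. destruct (exists_log_scale (6 * M + 2) delta L) as [D0 HD0]. exists D0.
  intros c N g n Hc Hg E0 En.
  assert (shrink : forall t, (forall i, i <= n -> near_chain (g i) c N (D0 + t)) ->
                             forall i, i <= n -> near_chain (g i) c N D0).
  { induction t as [|t IH]; intro Ht; [now rewrite Nat.add_0_r in Ht|]. apply IH.
    rewrite Nat.add_succ_r in Ht.
    destruct (HD0 (S (D0 + t)) ltac:(lia)) as [k [Hk1 Hk2]].
    now apply geodesic_near_quasigeodesic_chain_step with L M k. }
  apply (shrink n). intros i li. exists 0. split; [lia|].
  rewrite <- E0, word_dist_sym, Hg by lia. lia.
Qed.

Lemma quasigeodesic_chain_near_geodesic L M : 1 <= L -> exists D,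
  forall c N g n, quasigeodesic_chain L M c N -> geodesic_chain g n -> g 0 = c 0 -> g n = c N ->
  forall m, m <= N -> near_chain (c m) g n D.
Proof.
  intro HL. destruct (geodesic_near_quasigeodesic_chain L M HL) as [D1 HD1].
  exists (L * (M * (2 * D1 + 1)) + D1). intros c N g n Hcq Hg E0 En m lm.
  destruct (nat_crossing (fun i => exists j, j <= m /\ word_dist (g i) (c j) <= D1)
                         (fun i => exists j, m <= j <= N /\ word_dist (g i) (c j) <= D1) n)
    as [i [li [[j1 [lj1 D1j]] Hcross]]].
  - exists 0. rewrite E0, word_dist_refl. split; lia.
  - exists N. rewrite En, word_dist_refl. split; lia.
  - intros i li. destruct (HD1 c N g n Hcq Hg E0 En i li) as [j [lj Dj]].
    destruct (Nat.le_ge_cases j m); [left|right]; exists j; split; auto; lia.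
  - assert (exists i', i' <= n /\ word_dist (g i) (g i') <= 1 /\
              exists j2, m <= j2 <= N /\ word_dist (g i') (c j2) <= D1)
      as [i' [li' [Dii' [j2 [lj2 D2j]]]]].
    { destruct Hcross as [Q|[lt Q]]; [exists i|exists (S i)];
        (split; [lia|split; [rewrite Hg by lia; lia|exact Q]]). }
    pose proof (word_dist_triangle (c j1) (g i) (c j2)).
    pose proof (word_dist_triangle (g i) (g i') (c j2)).
    pose proof (quasigeodesic_chain_index_gap L M c N j1 j2 Hcq ltac:(lia) ltac:(lia)).
    pose proof (coarse_chain_dist L c N j1 m (proj1 Hcq) lj1 lm).
    pose proof (word_dist_triangle (c m) (c j1) (g i)).
    rewrite (word_dist_sym (c j1) (g i)), (word_dist_sym (c m) (c j1)) in *.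
    exists i. split; [exact li|]. nia.
Qed.

Lemma quasigeodesic_chains_fellow_travel L M : 1 <= L -> exists D,
  forall c1 N1 c2 N2, quasigeodesic_chain L M c1 N1 -> quasigeodesic_chain L M c2 N2 ->
  c1 0 = c2 0 -> c1 N1 = c2 N2 -> forall i, i <= N1 -> near_chain (c1 i) c2 N2 D.
Proof.
  intro HL. destruct (geodesic_near_quasigeodesic_chain L M HL) as [D1 HD1].
  destruct (quasigeodesic_chain_near_geodesic L M HL) as [D2 HD2]. exists (D2 + D1).
  intros c1 N1 c2 N2 H1 H2 E0 EN i li.
  destruct (geodesic_chain_exists (c1 0) (c1 N1)) as [g [Hg [Eg0 EgN]]].
  apply near_chain_trans with g (word_dist (c1 0) (c1 N1)).
  - now apply HD2 with N1.
  - intros j lj. apply HD1 with (n := word_dist (c1 0) (c1 N1)); auto; congruence.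
Qed.
End Hyperbolic.

End WordMetric.

(** * Change of generating set *)

Lemma word_dist_lipschitz {H : Group} {Y1 Y2 : Type} (s1 : Y1 -> H) (s2 : Y2 -> H) :
  (forall a : H, exists w, word_eval s1 w = a) ->
  (forall a : H, exists w, word_eval s2 w = a) -> Finite Y1 ->
  exists L, 1 <= L /\ forall a b, word_dist s2 a b <= L * word_dist s1 a b.
Proof.
  intros gen1 gen2 [l Hl].
  set (f := fun y => word_dist s2 gone (s1 y)). set (L := 1 + list_max (map f l)).
  assert (HL : forall a y, word_dist s2 a (gmul a (s1 y)) <= L).
  { intros a y. rewrite <- (gmul_one_r _ a) at 1. rewrite word_dist_mul_l by exact gen2.
    assert (Hmax : Forall (fun k => k <= list_max (map f l)) (map f l)) by now apply list_max_le.
    rewrite Forall_forall in Hmax. specialize (Hmax _ (in_map f _ _ (Hl y))).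
    unfold L, f in *. lia. }
  exists L. split; [unfold L; lia|]. intros a b.
  destruct (geodesic_word_exists s1 gen1 a b) as [w [<- <-]]. revert a.
  induction w as [|y w IH]; intro a; simpl.
  - rewrite gmul_one_r, (word_dist_refl s2 gen2). lia.
  - rewrite gassoc. specialize (IH (gmul a (s1 y))). specialize (HL a y).
    pose proof (word_dist_triangle s2 gen2 a (gmul a (s1 y))
                  (gmul (gmul a (s1 y)) (word_eval s1 w))).
    lia.
Qed.

Lemma exists_INR_ge (r : R) : exists n : nat, (r <= INR n)%R.
Proof.
  destruct (Rle_or_lt r 0) as [le|lt]; [now exists 0|].
  exists (Z.to_nat (up r)). destruct (archimed r) as [Hup _].
  rewrite INR_IZR_INZ, Z2Nat.id; [lra|]. apply le_IZR. lra.
Qed.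

Section QuasigeodesicWords.
Context {H : Group} {X : Type} (s : X -> H).
Hypothesis s_gen : forall a : H, exists w, word_eval s w = a.

Lemma quasigeodesic_index_gap lam Lam w : quasigeodesic s lam w -> (lam <= INR Lam)%R ->
  forall i j, i <= j -> j <= length w ->
  j - i <= Lam * word_dist s (vertex s gone w i) (vertex s gone w j).
Proof.
  intros Hq HLam i j le lj.
  destruct (Hq i j _ ltac:(lia) lj (word_dist_spec s s_gen _ _)) as [Hlow _].
  rewrite Nat.max_r, Nat.min_l in Hlow by exact le.
  apply INR_le. rewrite mult_INR. eapply Rle_trans; [exact Hlow|].
  apply Rmult_le_compat_r; [apply pos_INR|exact HLam].
Qed.

Lemma geodesic_index_gap x p : geodesic_word s gone x p ->
  forall i j, i <= j -> j <= length p ->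
  j - i <= word_dist s (vertex s gone p i) (vertex s gone p j).
Proof. intros Hp i j le lj. rewrite (geodesic_word_chain s s_gen _ _ _ Hp) by assumption. lia. Qed.

Variables (Y : Type) (t : Y -> H).
Hypothesis t_gen : forall a : H, exists w, word_eval t w = a.
Variables L1 L2 : nat.
Hypothesis t_le_s : forall a b, word_dist t a b <= L1 * word_dist s a b.
Hypothesis s_le_t : forall a b, word_dist s a b <= L2 * word_dist t a b.

Lemma vertex_quasigeodesic_chain Lam w :
  (forall i j, i <= j -> j <= length w ->
     j - i <= Lam * word_dist s (vertex s gone w i) (vertex s gone w j)) ->
  quasigeodesic_chain t L1 (Lam * L2) (vertex s gone w) (length w).
Proof.
  intro Hgap. split.
  - intros i lt. pose proof (word_dist_vertex s s_gen gone w i (S i) (Nat.le_succ_diag_r i)).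
    specialize (t_le_s (vertex s gone w i) (vertex s gone w (S i))). nia.
  - intros i j le lj. specialize (Hgap i j le lj).
    specialize (s_le_t (vertex s gone w i) (vertex s gone w j)). nia.
Qed.

End QuasigeodesicWords.

(* Hyperbolicity is witnessed by another generating set [t]; the two word metrics are
   bi-Lipschitz, so the vertex paths of [s]-words are quasigeodesic chains for [t]. *)
Lemma near_geodesic_near_quasigeodesic {H : Group} {X : Type} (s : X -> H) :
  word_hyperbolic H -> fin_sym_gen s -> forall (lam : R) (k : nat), exists D,
  forall (x g : H) (p u : list X), geodesic_word s gone x p -> word_eval s u = x ->
  quasigeodesic s lam u -> near_path s k g gone p -> near_path s D g gone u.
Proof.
  intros [Y [t [delta [[FinY [t_sym t_gen]] t_hyp]]]] [FinX [_ s_gen]] lam k.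
  destruct (word_dist_lipschitz s t s_gen t_gen FinX) as [L1 [HL1 t_le_s]].
  destruct (word_dist_lipschitz t s t_gen s_gen FinY) as [L2 [_ s_le_t]].
  destruct (exists_INR_ge lam) as [Lam HLam].
  destruct (quasigeodesic_chains_fellow_travel t t_sym t_gen delta t_hyp L1 ((Lam + 1) * L2) HL1)
    as [D HD].
  exists (L2 * (L1 * k + D)). intros x g p u Hp Hu Hq [i [li Hi]].
  assert (Cp : quasigeodesic_chain t L1 ((Lam + 1) * L2) (vertex s gone p) (length p)).
  { apply vertex_quasigeodesic_chain; auto. intros i' j' le lj.
    pose proof (geodesic_index_gap s s_gen x p Hp i' j' le lj). nia. }
  assert (Cu : quasigeodesic_chain t L1 ((Lam + 1) * L2) (vertex s gone u) (length u)).
  { apply vertex_quasigeodesic_chain; auto. intros i' j' le lj.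
    pose proof (quasigeodesic_index_gap s s_gen lam Lam u Hq HLam i' j' le lj). nia. }
  assert (Eend : vertex s gone p (length p) = vertex s gone u (length u))
    by (now rewrite !vertex_length, (proj1 Hp), Hu, gone_l).
  destruct (HD _ _ _ _ Cp Cu ltac:(now rewrite !vertex_0) Eend i li) as [m [lm Dm]].
  exists m. split; [exact lm|]. apply dist_le_iff; [exact s_gen|].
  apply dist_le_iff in Hi; [|exact s_gen].
  pose proof (t_le_s g (vertex s gone p i)).
  pose proof (word_dist_triangle t t_gen g (vertex s gone p i) (vertex s gone u m)).
  pose proof (Nat.mul_le_mono_l _ _ L1 Hi).
  eapply Nat.le_trans; [apply s_le_t|]. apply Nat.mul_le_mono_l. lia.
Qed.

(** * Central extensions *)

Section CentralExtension.
Context {E G : Group} (iota : Z -> E) (pi : E -> G).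
Hypothesis iota_add : forall m n : Z, iota (m + n)%Z = gmul (iota m) (iota n).
Hypothesis iota_inj : forall m n : Z, iota m = iota n -> m = n.
Hypothesis iota_central : forall (n : Z) (e : E), gmul (iota n) e = gmul e (iota n).

Lemma iota_0 : iota 0%Z = gone.
Proof. apply (gmul_cancel_l _ (iota 0%Z)). now rewrite <- iota_add, gmul_one_r. Qed.

Lemma iota_cancel n e : gmul (iota (- n)) (gmul (iota n) e) = e.
Proof. now rewrite gassoc, <- iota_add, Z.add_opp_diag_l, iota_0, gone_l. Qed.

Lemma fib_le_iff x y : fib_le iota x y <-> exists n, (0 <= n)%Z /\ y = gmul (iota n) x.
Proof.
  split; intros [n [Hn En]]; exists n; split; auto.
  - now rewrite <- En, <- gassoc, ginv_l, gmul_one_r.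
  - now rewrite En, <- gassoc, gmul_inv_r, gmul_one_r.
Qed.

Lemma fib_le_mul a b c d : fib_le iota a b -> fib_le iota c d -> fib_le iota (gmul a c) (gmul b d).
Proof.
  rewrite !fib_le_iff. intros [n [Hn ->]] [m [Hm ->]]. exists (n + m)%Z. split; [lia|].
  now rewrite iota_add, <- !gassoc, (gassoc _ a), <- iota_central, <- gassoc.
Qed.

Lemma fib_le_iota_mul n m x : fib_le iota (gmul (iota n) x) (gmul (iota m) x) -> (n <= m)%Z.
Proof.
  rewrite fib_le_iff. intros [k [Hk E1]]. rewrite gassoc, <- iota_add in E1.
  apply gmul_cancel_r, iota_inj in E1. lia.
Qed.

Variables (C : Z) (X : Type) (ev : X -> E).

Lemma wval_app u v : wval ev iota C (u ++ v) = gmul (wval ev iota C u) (wval ev iota C v).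
Proof.
  unfold wval. rewrite word_eval_app, length_app, Nat2Z.inj_add, Z.mul_add_distr_l, iota_add.
  rewrite <- !gassoc. f_equal. rewrite !gassoc. f_equal. symmetry. apply iota_central.
Qed.

Lemma wval_insert_loop u v w : word_eval ev v = gone ->
  wval ev iota C (u ++ v ++ w) =
  gmul (iota (- C * Z.of_nat (length v))%Z) (wval ev iota C (u ++ w)).
Proof.
  intro Ev. rewrite !wval_app. unfold wval at 2. rewrite Ev, gone_l.
  now rewrite gassoc, <- iota_central, <- gassoc.
Qed.

Lemma iota_dist_le :
  (forall e : E, exists w, word_eval ev w = e) ->
  exists K0, forall (n : Z) (e : E),
    (0 <= n)%Z -> dist_le ev (gmul (iota n) e) e (Z.to_nat n * K0).
Proof.
  intro gen. destruct (gen (iota (-1)%Z)) as [z1 Ez1]. exists (length z1).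
  assert (Hpow : forall t : nat,
    exists z, length z <= t * length z1 /\ word_eval ev z = iota (- Z.of_nat t)%Z).
  { induction t as [|t [z [Lz Ez]]].
    - exists []. split; [simpl; lia|]. simpl. now rewrite iota_0.
    - exists (z1 ++ z). rewrite length_app, word_eval_app, Ez1, Ez, <- iota_add.
      split; [lia|]. f_equal. lia. }
  intros n e Hn. destruct (Hpow (Z.to_nat n)) as [z [Lz Ez]]. exists z. split; [exact Lz|].
  now rewrite Ez, Z2Nat.id, <- iota_central, iota_cancel by exact Hn.
Qed.

Hypothesis pi_hom : is_group_hom pi.
Variable rho : G -> E.
Hypothesis rho_max : forall g : G, is_fib_max ev iota pi C g (rho g).

Lemma rho_mul_ge g h :
  exists n, (0 <= n)%Z /\ rho (gmul g h) = gmul (iota n) (gmul (rho g) (rho h)).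
Proof.
  destruct (rho_max g) as [[wg [Pg <-]] _]. destruct (rho_max h) as [[wh [Ph <-]] _].
  apply fib_le_iff. rewrite <- wval_app. apply rho_max.
  now rewrite word_eval_app, pi_hom, Pg, Ph.
Qed.

(* [A ++ v] and [w ++ B] represent [g] and [h], so their values lie below [rho g] and
   [rho h]; the product of these values is [rho (g h)] shifted by the loop [v ++ w]. *)
Lemma rho_mul_defect g h A B v w :
  word_eval ev (v ++ w) = gone ->
  pi (word_eval ev (A ++ v)) = g -> pi (word_eval ev (w ++ B)) = h ->
  wval ev iota C (A ++ B) = rho (gmul g h) ->
  exists n, (0 <= n <= C * Z.of_nat (length (v ++ w)))%Z /\
    rho (gmul g h) = gmul (iota n) (gmul (rho g) (rho h)).
Proof.
  intros Eloop HA HB EAB. destruct (rho_mul_ge g h) as [n [Hn En]]. exists n.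
  split; [split; [exact Hn|]|exact En].
  pose proof (fib_le_mul _ _ _ _ (proj2 (rho_max g) _ HA) (proj2 (rho_max h) _ HB)) as Hle.
  rewrite <- wval_app, <- app_assoc, (app_assoc v w B), wval_insert_loop, EAB in Hle
    by exact Eloop.
  rewrite <- (iota_cancel n (gmul (rho g) (rho h))), <- En in Hle.
  apply fib_le_iota_mul in Hle. lia.
Qed.

End CentralExtension.

Theorem lemma3p2 (E G : Group) (iota : Z -> E) (pi : E -> G)
  (X : Type) (ev : X -> E) (C : Z) (rho : G -> E) :
  word_hyperbolic G ->
  central_extension E G iota pi ->
  fin_sym_gen ev ->
  (0 < C)%Z ->
  (forall g : G, is_fib_max ev iota pi C g (rho g)) ->
  (exists lam : R, (0 < lam)%R /\
     forall (g : G) (w : list X),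
       pi (word_eval ev w) = g -> wval ev iota C w = rho g ->
       quasigeodesic (fun x => pi (ev x)) lam w) ->
  forall k : nat, exists K : nat, forall g h : G,
    (exists p : list X,
       geodesic_word (fun x => pi (ev x)) gone (gmul g h) p /\
       near_path (fun x => pi (ev x)) k g gone p) ->
    dist_le ev (rho (gmul g h)) (gmul (rho g) (rho h)) K.
Proof.
  intros G_hyp [iota_add [iota_inj [pi_hom [pi_surj [_ iota_central]]]]] ev_gen _ rho_max
    [lam [_ rho_qgeod]] k.
  destruct (near_geodesic_near_quasigeodesic _ G_hyp
              (fin_sym_gen_hom_image pi pi_hom ev pi_surj ev_gen) lam k) as [D HD].
  destruct (iota_dist_le iota iota_add iota_central X ev (proj2 (proj2 ev_gen))) as [K0 HK0].
  exists (Z.to_nat C * (2 * D) * K0). intros g h [p [Hp Hnear]].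
  destruct (rho_max (gmul g h)) as [[u [Pu Wu]] _].
  pose proof Pu as Pu'. rewrite (hom_word_eval pi pi_hom) in Pu'.
  destruct (HD _ g p u Hp Pu' (rho_qgeod _ u Pu Wu) Hnear) as [m [lm [w [Lw Ew]]]].
  destruct (word_inv_exists ev (proj1 (proj2 ev_gen)) w) as [v [Lv Ev]].
  destruct (word_eval_split_at (fun x => pi (ev x)) g h u w v m Pu') as [HA HB].
  { unfold vertex in Ew. now rewrite gone_l in Ew. }
  { now rewrite <- !(hom_word_eval pi pi_hom), Ev, (hom_inv pi pi_hom). }
  rewrite <- (hom_word_eval pi pi_hom) in HA, HB.
  destruct (rho_mul_defect iota pi iota_add iota_inj iota_central C X ev pi_hom rho rho_max
              g h (firstn m u) (skipn m u) v w) as [n [Hn ->]]; auto.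
  { now rewrite word_eval_app, Ev, ginv_l. }
  { now rewrite firstn_skipn. }
  rewrite length_app, Lv in Hn.
  assert (Hn_le : Z.to_nat n <= Z.to_nat C * (2 * D)) by nia.
  destruct (HK0 n (gmul (rho g) (rho h)) (proj1 Hn)) as [z [Lz Ez]].
  exists z. split; [|exact Ez]. eapply Nat.le_trans; [exact Lz|]. now apply Nat.mul_le_mono_r.
Qed.
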